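(* Let $n\ge 1$, $m\ge1$ and $W=A_{n-1}$. Then $$\sum_{R}q^{\operatorname{coh}(R)}=\sum_{D\in\mathcal{D}^{(m)}_n}q^{\operatorname{area}(D)},$$ where $R$ ranges over the positive regions of the extended Shi arrangement $\mathsf{Shi}^{(m)}(A_{n-1})$.
   Context: For a crystallographic reflection group $W$ acting on a real Euclidean space $V$ with root system $\Phi$ and positive roots $\Phi^+$ ($N=|\Phi^+|$), the extended Shi arrangement $\mathsf{Shi}^{(m)}(W)$ consists of the hyperplanes $H^{(k)}_\alpha=\{x:(\alpha,x)=k\}$ for $\alpha\in\Phi^+$, $-m<k\le m$. A region is a connected component of the complement of these hyperplanes; it is positive if it lies in the fundamental chamber $\{x:(\alpha,x)>0\ \forall\alpha\in\Phi^+\}$. Let $R^0=\{x:0<(\alpha,x)<1\ \forall\alpha\in\Phi^+\}$; the height of a region $R$ is the number of hyperplanes of $\mathsf{Shi}^{(m)}(W)$ separating $R$ from $R^0$, and $\operatorname{coh}(R)=mN-\operatorname{height}(R)$. For $A_{n-1}$, $\Phi^+=\{e_j-e_i:1\le i<j\le n\}$ in $\{x\in\mathbb{R}^n:\sum x_i=0\}$. $\mathcal{D}^{(m)}_n$ is the set of $m$-Dyck paths of semilength $n$: north-east lattice paths from $(0,0)$ to $(mn,n)$ (unit north and east steps) staying weakly above the line $x=my$; $\operatorname{area}(D)$ is the number of full unit lattice squares lying between $D$ and the line $x=my$. *)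

From HB Require Import structures.
From mathcomp Require Import all_boot all_order all_algebra.
From Stdlib Require Import ClassicalEpsilon.
Set Implicit Arguments. Unset Strict Implicit. Unset Printing Implicit Defensive.
Import Order.TTheory GRing.Theory Num.Theory.

Definition propb (P : Prop) : bool :=
  if excluded_middle_informative P then true else false.

(* Positive roots e_j - e_i, 1 <= i < j <= n, encoded as pairs (i,j) with i<j. *)
Definition proot (n : nat) := {p : 'I_n * 'I_n | p.1 < p.2}.

Local Open Scope ring_scope.

Definition rootpair (R : realFieldType) (n : nat) (a : proot n) (x : 'I_n -> R) : R :=
  x (val a).2 - x (val a).1.

Definition inV (R : realFieldType) (n : nat) (x : 'I_n -> R) : Prop :=
  \sum_(i < n) x i = 0.

(* Hyperplanes of Shi^(m): H_alpha^k, alpha positive, -m < k <= m.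
   Index h : 'I_(2m) encodes k = h + 1 - m. *)
Definition hlevel (R : realFieldType) (m : nat) (h : 'I_(m.*2)) : R :=
  (h.+1)%:R - m%:R.

(* For each positive root alpha, the 2m parallel hyperplanes H_alpha^k cut the
   line of values of (alpha,x) into 2m+1 open intervals, indexed by
   c : 'I_(2m+1): interval c is  (c - m, c + 1 - m), where the lower bound is
   -infinity for c = 0 and the upper bound is +infinity for c = 2m.
   A "cell" is a choice of such an interval for every positive root; the points
   of V in cell c are those x with (alpha,x) in interval (c alpha) for all alpha. *)
Definition cellidx (n m : nat) := {ffun proot n -> 'I_(m.*2.+1)}.

Definition in_interval (R : realFieldType) (m : nat) (c : 'I_(m.*2.+1)) (v : R) : Prop :=
  ((c : nat) = 0%N \/ (c%:R - m%:R < v)) /\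
  ((c : nat) = m.*2 \/ (v < c.+1%:R - m%:R)).

Definition in_cell (R : realFieldType) (n m : nat) (c : cellidx n m) (x : 'I_n -> R) : Prop :=
  inV x /\ forall a : proot n, in_interval (c a) (rootpair a x).
Arguments in_cell R {n m} c x.

(* The regions of Shi^(m) (connected components of V minus the hyperplanes) are
   exactly the nonempty cells; each region corresponds to a unique index c. *)
Definition is_region (R : realFieldType) (n m : nat) (c : cellidx n m) : Prop :=
  exists x, in_cell R c x.

Definition is_pos_region (R : realFieldType) (n m : nat) (c : cellidx n m) : Prop :=
  is_region R c /\
  forall x, in_cell R c x -> forall a : proot n, 0 < rootpair a x.

(* R^0 = {x : 0 < (alpha,x) < 1 for all alpha}: the cell with all intervals (0,1),
   i.e. index m. *)
Definition c0 (n m : nat) : cellidx n m := [ffun _ => inord m].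

Definition separates (R : realFieldType) (n m : nat) (c c' : cellidx n m)
    (H : proot n * 'I_(m.*2)) : Prop :=
  exists x y, in_cell R c x /\ in_cell R c' y /\
    ((rootpair H.1 x < hlevel R H.2 < rootpair H.1 y) \/
     (rootpair H.1 y < hlevel R H.2 < rootpair H.1 x)).

Definition height (R : realFieldType) (n m : nat) (c : cellidx n m) : nat :=
  #|[set H : proot n * 'I_(m.*2) | propb (separates R c (c0 n m) H)]|.

Definition coh (R : realFieldType) (n m : nat) (c : cellidx n m) : nat :=
  (m * #|{: proot n}| - height R c)%N.

(* A path is a word of steps: true = north step (0,1), false = east step (1,0). *)

(* Number of east steps before the (b+1)-th north step: the x-coordinate of
   the path in the row y in [b, b+1]. *)
Fixpoint east_before (s : seq bool) (b : nat) : nat :=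
  match s with
  | [::] => 0%N
  | true :: s' => if b is b'.+1 then east_before s' b' else 0%N
  | false :: s' => (east_before s' b).+1
  end.

Definition dyckb (m n : nat) (D : seq bool) : bool :=
  [&& size D == (m * n + n)%N, count id D == n,
      count negb D == (m * n)%N &
      [forall k : 'I_(size D).+1,
         count negb (take k D) <= m * count id (take k D)]]%N.

(* area(D): number of full unit squares [a,a+1]x[b,b+1] lying between D and the
   line x = m y: to the right of the path (a >= east_before D b) and to the left
   of the line (a + 1 <= m b). *)
Definition area (m n : nat) (D : seq bool) : nat :=
  (\sum_(b < n) \sum_(a < m * n) ((east_before D b <= a) && (a.+1 <= m * b)))%N.

(* Let [x] be a point of a positive region [c] and, for [i < j], let [k_ij] be the
   number of [s] in [1..m] with [x_i + s < x_j]; the cell index of [c] at the root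
   [e_j - e_i] is [m + k_ij], and the hyperplanes separating [c] from [R^0] are the
   [H^s_(e_j - e_i)] with [1 <= s <= k_ij].  Hence
     coh c = sum_(i < j) (m - k_ij) = sum_j (m j - e_j),   e_j = sum_(i < j) k_ij,
   where [e_j] counts the points [x_i + s] ([i < j], [1 <= s <= m]) lying below [x_j].
   So [e] is weakly increasing with [e_j <= m j]: it lists the columns of the north
   steps of an m-Dyck path, whose area is exactly [sum_j (m j - e_j)].  Knowing
   [e_0, ..., e_j] determines, row by row, the relative order of all the points
   [x_i + s] and [x_j], hence [c]; conversely every such [e] is realised by placing
   [x_0 < x_1 < ...] one at a time into a suitable gap between the points already
   created.  Thus [c |-> e] is an area-preserving bijection onto m-Dyck paths. *)

From HB Require Import structures.
From mathcomp Require Import all_boot all_order all_algebra.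
From mathcomp Require Import zify lra.
From Stdlib Require Import ClassicalEpsilon.
Set Implicit Arguments. Unset Strict Implicit. Unset Printing Implicit Defensive.
Import Order.TTheory GRing.Theory Num.Theory.

Lemma sum_ord_range N x y :
  (\sum_(a < N) ((x <= a) && (a < y)))%N = (minn y N - x)%N.
Proof.
elim: N => [|N IH]; first by rewrite big_ord0; lia.
by rewrite big_ord_recr /= IH; case: (leqP x N) => xN; case: (ltnP N y) => Ny /=; lia.
Qed.

Lemma sum_ord_lt N y : (\sum_(a < N) (a < y))%N = minn y N.
Proof. by rewrite -[RHS]subn0 -sum_ord_range. Qed.

Lemma card_set_sum (T : finType) (P : pred T) : #|[set x | P x]| = (\sum_x P x)%N.
Proof. by rewrite -sum1dep_card big_mkcond /=; apply: eq_bigr => x _; case: (P x). Qed.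

Lemma card_sum_mem (T : finType) (A : {pred T}) : #|A| = (\sum_x (x \in A))%N.
Proof. by rewrite -sum1_card big_mkcond; apply: eq_bigr => x _; case: (x \in A). Qed.

Lemma sum_pair (T1 T2 : finType) (F : T1 * T2 -> nat) :
  (\sum_p F p = \sum_i \sum_j F (i, j))%N.
Proof. by rewrite pair_big; apply: eq_bigr => -[]. Qed.

Lemma card_ord_lt N u : #|[set t : 'I_N | (t < u)%N]| = minn u N.
Proof. by rewrite card_set_sum sum_ord_lt. Qed.

Lemma downward_closed_ltE M (P : pred 'I_M) :
  (forall t t' : 'I_M, (t' <= t)%N -> P t -> P t') ->
  forall t, P t = (t < #|[set t | P t]|)%N.
Proof.
move=> P_down t; apply/idP/idP => [Pt|].
  have sub : [set t' : 'I_M | (t' < t.+1)%N] \subset [set t | P t].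
    by apply/subsetP => t'; rewrite !inE ltnS => le_t't; apply: P_down le_t't Pt.
  by have := subset_leq_card sub; rewrite card_ord_lt (minn_idPl (ltn_ord t)).
apply: contraTT => nPt; rewrite -leqNgt.
have sub : [set t | P t] \subset [set t' : 'I_M | (t' < t)%N].
  apply/subsetP => t'; rewrite !inE ltnNge => Pt'.
  by apply: contra nPt => le_tt'; apply: P_down le_tt' Pt'.
by have := subset_leq_card sub; rewrite card_ord_lt (minn_idPl (ltnW (ltn_ord t))).
Qed.

Lemma eq_sublevel_sets (R : realDomainType) (T : finType) (S : {set T}) (f g : T -> R) u v :
  {in S &, forall p q, (f p < f q) = (g p < g q)}%R ->
  #|[set p in S | (f p < u)%R]| = #|[set p in S | (g p < v)%R]| ->
  [set p in S | (f p < u)%R] = [set p in S | (g p < v)%R].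
Proof.
move=> fg card_eq.
case: (boolP ([set p in S | (f p < u)%R] \subset [set p in S | (g p < v)%R])) => [sub|].
  by apply/eqP; rewrite eqEcard sub card_eq /=.
move=> /subsetPn[p]; rewrite !inE => /andP[pS fpu] /nandP[/negP//|]; rewrite -leNgt => vgp.
apply/esym/eqP; rewrite eqEcard card_eq leqnn andbT; apply/subsetP => q.
rewrite !inE => /andP[qS gqv]; rewrite qS /=.
have : (g q < g p)%R by apply: lt_le_trans gqv vgp.
by rewrite -fg // => fqp; apply: lt_trans fqp fpu.
Qed.

Lemma propbP (P : Prop) : reflect P (propb P).
Proof. by rewrite /propb; case: excluded_middle_informative => h; constructor. Qed.

(** * m-Dyck paths and their column profiles *)

(* The word that starts at column [p], takes its [i]-th north step ([i < n])
   at column [E i], and ends at column [T]. *)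
Fixpoint profile_word (E : nat -> nat) (p n T : nat) : seq bool :=
  if n is n'.+1 then nseq (E 0 - p) false ++ true :: profile_word (E \o succn) (E 0) n' T
  else nseq (T - p) false.

Fixpoint profile_between (E : nat -> nat) (p n T : nat) : Prop :=
  if n is n'.+1 then p <= E 0 /\ profile_between (E \o succn) (E 0) n' T else p <= T.

Lemma profile_betweenW n E p T :
  (forall i j, i <= j -> j < n -> E i <= E j) ->
  (forall i, i < n -> p <= E i <= T) -> p <= T -> profile_between E p n T.
Proof.
elim: n E p => [|n IH] E p //= homoE bE pT.
have /andP[pE0 _] := bE 0 isT.
split=> //; apply: IH => [i j ij j_n|i i_n|].
- by rewrite /=; apply: homoE; lia.
- by rewrite /=; have := bE i.+1 i_n; have := homoE 0 i.+1 isT i_n; lia.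
- by have := bE 0 isT; lia.
Qed.

Lemma eq_profile_word n E E' p T : (forall i, i < n -> E i = E' i) ->
  profile_word E p n T = profile_word E' p n T.
Proof.
elim: n E E' p => [|n IH] E E' p eqE //=.
by rewrite eqE // (IH (E \o succn) (E' \o succn)) // => i i_n; apply: eqE.
Qed.

Lemma profile_between_le n E p T : profile_between E p n T -> p <= T.
Proof. by elim: n E p => [|n IH] E p //= [pE /IH]; lia. Qed.

Lemma profile_between_ge n E p T i : profile_between E p n T -> i < n -> p <= E i.
Proof.
elim: n E p i => [|n IH] E p [|i] //= [pE bE] i_n //.
by have := IH _ _ _ bE i_n; rewrite /=; lia.
Qed.

Lemma size_profile_word n E p T : profile_between E p n T ->
  size (profile_word E p n T) = (T - p + n)%N.
Proof.
elim: n E p => [|n IH] E p /=; first by rewrite size_nseq addn0.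
move=> [pE bE]; rewrite size_cat size_nseq /= IH //.
by have := profile_between_le bE; lia.
Qed.

Lemma count_profile_word n E p T : profile_between E p n T ->
  count id (profile_word E p n T) = n /\ count negb (profile_word E p n T) = (T - p)%N.
Proof.
elim: n E p => [|n IH] E p /=; first by rewrite !count_nseq /=; split; lia.
move=> [pE bE]; rewrite !count_cat !count_nseq /=.
by have [-> ->] := IH _ _ bE; have := profile_between_le bE; split; lia.
Qed.

Lemma east_before_nseq_cat d s b : east_before (nseq d false ++ s) b = (d + east_before s b)%N.
Proof. by elim: d => //= d ->. Qed.

Lemma east_before_profile_word n E p T i : profile_between E p n T -> i < n ->
  east_before (profile_word E p n T) i = (E i - p)%N.
Proof.
elim: n E p i => [|n IH] E p i //= [pE bE] i_n.
rewrite east_before_nseq_cat; case: i i_n => [|i] i_n /=; first by rewrite addn0.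
by rewrite IH //; have := profile_between_ge bE i_n; rewrite /=; lia.
Qed.

Lemma east_before_homo s : {homo east_before s : i j / i <= j}.
Proof.
elim: s => [|[] s IH] i j ij //=; last exact: IH.
by case: i ij => [|i] //; case: j => [|j] //= ij; apply: IH.
Qed.

Lemma east_before_le_count s b : east_before s b <= count negb s.
Proof. by elim: s b => [|[] s IH] [|b] //=; rewrite ?add0n ?add1n ?ltnS. Qed.

Lemma profile_word_east_before s n p : count id s = n ->
  profile_word (fun i => p + east_before s i)%N p n (p + count negb s) = s.
Proof.
elim: s n p => [|[] s IH] n p /= cs.
- by rewrite -cs /= addn0 subnn.
- rewrite add1n in cs; rewrite -cs /= addn0 subnn /= add0n; congr (_ :: _).
  exact: IH.
- rewrite add0n in cs; rewrite -[in RHS](IH n p.+1 cs).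
  case: n cs => [|n] cs /=.
    by rewrite (_ : (p + (1 + _) - p = (p.+1 + count negb s - p.+1).+1)%N); last lia.
  rewrite (_ : (p + _.+1 - p = (p.+1 + east_before s 0 - p.+1).+1)%N) /=; last lia.
  rewrite (_ : (p + (1 + _))%N = (p.+1 + count negb s)%N); last lia.
  rewrite (_ : (p + _.+1)%N = (p.+1 + east_before s 0)%N); last lia.
  by congr (_ :: _ ++ _ :: _); apply: eq_profile_word => i _ /=; lia.
Qed.

Definition weakly_above m (s : seq bool) (e0 n0 : nat) : Prop :=
  forall k, (e0 + count negb (take k s) <= m * (n0 + count id (take k s)))%N.

Lemma weakly_above_nseq_cat m d s e0 n0 :
  weakly_above m (nseq d false ++ s) e0 n0 <->
  (e0 + d <= m * n0)%N /\ weakly_above m s (e0 + d) n0.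
Proof.
split=> [above|[ed above] k].
- split.
    have := above d; rewrite take_cat size_nseq ltnn subnn take0 cats0 !count_nseq /=.
    lia.
  move=> k; have := above (d + k)%N.
  by rewrite take_cat size_nseq ltnNge leq_addr /= addKn !count_cat !count_nseq /=; lia.
- rewrite take_cat size_nseq; case: ltnP => kd.
    by rewrite take_nseq ?count_nseq /=; lia.
  by have := above (k - d)%N; rewrite !count_cat !count_nseq /=; lia.
Qed.

Lemma weakly_above_cons_north m s e0 n0 :
  weakly_above m (true :: s) e0 n0 <-> (e0 <= m * n0)%N /\ weakly_above m s e0 n0.+1.
Proof.
split=> [above|[en above] [|k]] /=.
- by split=> [|k]; [have := above 0%N | have := above k.+1]; rewrite /=; lia.
- by lia.
- by have := above k; lia.
Qed.

Lemma weakly_above_profile_word m n E p T n0 : profile_between E p n T ->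
  weakly_above m (profile_word E p n T) p n0 <->
  ((forall i, i < n -> E i <= m * (n0 + i)) /\ T <= m * (n0 + n))%N.
Proof.
elim: n E p n0 => [|n IH] E p n0 /=.
  move=> pT; rewrite -(cats0 (nseq _ _)) weakly_above_nseq_cat addn0.
  split=> [[+ _]|[_ Tm]]; first by split=> //; lia.
  by split=> [|k]; rewrite /=; lia.
move=> [pE bE]; rewrite weakly_above_nseq_cat weakly_above_cons_north.
rewrite (_ : (p + (E 0 - p))%N = E 0); last lia.
rewrite IH //; split.
- move=> [_ [E0 [EiS TS]]]; split; last by rewrite addnS -addSn.
  by move=> [|i] i_n; [rewrite addn0 | have := EiS i i_n; rewrite addnS -addSn].
- move=> [Ei TnS]; have := Ei 0%N isT; rewrite addn0 => E0.
  split=> //; split=> //; split; last by rewrite addSn -addnS.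
  by move=> i i_n; rewrite addSn -addnS; apply: Ei.
Qed.

Lemma dyck_condE m D :
  [forall k : 'I_(size D).+1, count negb (take k D) <= m * count id (take k D)]%N
  <-> weakly_above m D 0 0.
Proof.
split=> [/forallP above k|above]; last by apply/forallP => k; have := above k.
rewrite !add0n; case: (leqP k (size D)) => kD.
  exact: (above (Ordinal (n := (size D).+1) kD)).
by rewrite take_oversize ?(ltnW kD) //; have := above ord_max; rewrite /= take_size.
Qed.

Lemma dyckb_profile_word m n E :
  (forall i j, i <= j -> j < n -> E i <= E j) -> (forall i, i < n -> E i <= m * i)%N ->
  dyckb m n (profile_word E 0 n (m * n)).
Proof.
move=> homoE Em.
have bE : profile_between E 0 n (m * n).
  apply: profile_betweenW => // i i_n.
  have : (m * i <= m * n)%N by rewrite leq_mul2l ltnW ?orbT.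
  by have := Em i i_n; lia.
have [cN cE] := count_profile_word bE.
apply/and4P; split; last by apply/dyck_condE/weakly_above_profile_word.
all: by rewrite ?size_profile_word ?cN ?cE ?subn0.
Qed.

Lemma dyckb_profile m n D : dyckb m n D ->
  [/\ (forall i, i < n -> east_before D i <= m * i)%N &
      profile_word (east_before D) 0 n (m * n) = D].
Proof.
case/and4P => _ /eqP cN /eqP cE /dyck_condE above.
have bD : profile_between (east_before D) 0 n (m * n).
  apply: profile_betweenW => // [i j ij _|i _]; first exact: east_before_homo.
  by rewrite -cE east_before_le_count.
have wD : profile_word (east_before D) 0 n (m * n) = D.
  by rewrite -[RHS](profile_word_east_before 0 cN) cE.
split=> // i i_n; rewrite -wD in above.
by have [/(_ i i_n)] := (weakly_above_profile_word m 0 bD).1 above.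
Qed.

Lemma area_east_before m n D : (forall i, i < n -> east_before D i <= m * i)%N ->
  area m n D = (\sum_(b < n) (m * b - east_before D b))%N.
Proof.
move=> Dm; apply: eq_bigr => b _; rewrite sum_ord_range.
have : (m * b <= m * n)%N by rewrite leq_mul2l ltnW ?orbT.
lia.
Qed.

(** * Positive regions and their profiles *)

Local Open Scope ring_scope.

Section Levels.
Variables (R : realFieldType) (m : nat).

Lemma in_interval_level (c : 'I_(m.*2.+1)) (v : R) (k : 'I_(m.*2)) :
  in_interval c v -> (hlevel R k < v) = (k < c)%N /\ v != hlevel R k.
Proof.
move=> [lo hi]; rewrite /hlevel; have k2m := ltn_ord k.
case: (ltnP k c) => kc.
- have lt_kv : (k.+1)%:R - m%:R < v.
    case: lo => [c0|]; first by move: kc; rewrite c0.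
    by apply: le_lt_trans; rewrite lerD2r ler_nat.
  by rewrite lt_kv gt_eqF.
- have lt_vk : v < (k.+1)%:R - m%:R.
    case: hi => [c2|]; first by move: kc k2m; rewrite c2; lia.
    by move/lt_le_trans; apply; rewrite lerD2r ler_nat.
  by rewrite lt_eqF // ltNge ltW.
Qed.

Hypothesis m_gt0 : (0 < m)%N.

Lemma in_interval_nat (c : 'I_(m.*2.+1)) (v : R) (s : nat) : (s <= m)%N ->
  in_interval c v -> (s%:R < v) = (s + m <= c)%N /\ v != s%:R.
Proof.
move=> sm /in_interval_level lev.
have k2m : ((s + m).-1 < m.*2)%N by rewrite -addnn; lia.
have [] := lev (Ordinal k2m); rewrite /hlevel /= prednK ?addn_gt0 ?m_gt0 ?orbT //.
by rewrite natrD addrK.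
Qed.

End Levels.

Section Cells.
Variables (R : realFieldType) (n m : nat).

Definition positive_cell (c : cellidx n m) : Prop := forall a, (m <= c a)%N.

(* [root_level c i j] is the integer part of [x j - x i], capped at [m], for [x] in
   a positive cell [c] and [i < j]. *)
Definition root_level (c : cellidx n m) (i j : 'I_n) : nat :=
  oapp (fun a : proot n => c a - m)%N 0%N (insub (i, j)).

Lemma root_levelE (c : cellidx n m) (a : proot n) :
  root_level c (val a).1 (val a).2 = (c a - m)%N.
Proof. by rewrite /root_level -surjective_pairing valK. Qed.

Lemma root_level0 (c : cellidx n m) (i j : 'I_n) : (j <= i)%N -> root_level c i j = 0%N.
Proof. by move=> ji; rewrite /root_level insubF //= ltnNge ji. Qed.

Lemma root_level_le (c : cellidx n m) i j : (root_level c i j <= m)%N.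
Proof. by rewrite /root_level; case: insubP => //= a _ _; have := ltn_ord (c a); lia. Qed.

Definition lift_pt (x : 'I_n -> R) (p : 'I_n * 'I_m) : R := x p.1 + (p.2.+1)%:R.

Definition rows (k : nat) : {set 'I_n * 'I_m} := [set p : 'I_n * 'I_m | (p.1 < k)%N].

Definition points_below (x : 'I_n -> R) (k : nat) (y : R) : {set 'I_n * 'I_m} :=
  [set p in rows k | lift_pt x p < y].

Lemma card_rows k : (k <= n)%N -> #|rows k| = (k * m)%N.
Proof.
move=> kn; rewrite card_sum_mem sum_pair.
under eq_bigr => i _ do under eq_bigr => t _ do rewrite inE /=.
under eq_bigr => i _ do rewrite sum_nat_const card_ord.
by rewrite -big_distrr /= sum_ord_lt (minn_idPl kn) mulnC.
Qed.

Definition cell_profile (c : cellidx n m) (j : 'I_n) : nat := (\sum_(i < n) root_level c i j)%N.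

Definition lift_lt (k : 'I_n -> 'I_n -> nat) (p q : 'I_n * 'I_m) : bool :=
  if (p.1 < q.1)%N then (p.2 <= q.2)%N || (p.2 - q.2 <= k p.1 q.1)%N
  else if (q.1 < p.1)%N then (p.2 < q.2)%N && ~~ (q.2 - p.2 <= k q.1 p.1)%N
  else (p.2 < q.2)%N.

Hypothesis m_gt0 : (0 < m)%N.

Lemma is_pos_regionE (c : cellidx n m) :
  is_pos_region R c <-> is_region R c /\ positive_cell c.
Proof.
split=> [[[x xc] pos_x]|[[x xc] c_pos]].
- split=> [|a]; first by exists x.
  have [xV /(_ a) xa] := xc.
  by have [<- _] := in_interval_nat m_gt0 (leq0n m) xa; apply: pos_x.
- split=> [|y [yV yc] a]; first by exists x.
  by have [-> _] := in_interval_nat m_gt0 (leq0n m) (yc a); apply: c_pos.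
Qed.

Section PointOfCell.
Variables (c : cellidx n m) (x : 'I_n -> R).
Hypotheses (c_pos : positive_cell c) (x_in : in_cell R c x).

Lemma lt_sub_nat (i j : 'I_n) s : (i < j)%N -> (s <= m)%N ->
  (s%:R < x j - x i) = (s <= root_level c i j)%N /\ x j - x i != s%:R.
Proof.
move=> ij sm; pose a : proot n := exist _ (i, j) ij.
have [_ /(_ a) xa] := x_in; have := root_levelE c a; rewrite /= => ->.
have [-> ->] := in_interval_nat m_gt0 sm xa.
by split=> //; have := c_pos a; lia.
Qed.

Lemma point_of_cell_homo (i j : 'I_n) : (i < j)%N -> x i < x j.
Proof. by move=> ij; rewrite -subr_gt0; have [-> _] := lt_sub_nat ij (leq0n m). Qed.

Lemma root_level_card (i j : 'I_n) : (i < j)%N ->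
  root_level c i j = #|[set t : 'I_m | (t.+1)%:R < x j - x i]|.
Proof.
move=> ij; rewrite card_set_sum.
under eq_bigr => t _ do rewrite (lt_sub_nat ij (ltn_ord t)).1.
by rewrite sum_ord_lt (minn_idPl (root_level_le c i j)).
Qed.

Lemma root_level_row (i j : 'I_n) :
  root_level c i j = #|[set t | (i, t) \in points_below x j (x j)]|.
Proof.
case: (ltnP i j) => ij; last first.
  by rewrite root_level0 //; apply/esym/eqP; rewrite cards_eq0; apply/eqP/setP => t;
     rewrite !inE /= ltnNge ij.
by rewrite root_level_card //; apply: eq_card => t; rewrite !inE /= ij ltrBrDl.
Qed.

Lemma cell_profile_card (j : 'I_n) : cell_profile c j = #|points_below x j (x j)|.
Proof.
rewrite card_sum_mem sum_pair; apply: eq_bigr => i _.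
by rewrite root_level_row card_set_sum.
Qed.

Lemma cell_profile_homo (i j : 'I_n) : (i <= j)%N -> (cell_profile c i <= cell_profile c j)%N.
Proof.
move=> ij; rewrite !cell_profile_card; apply/subset_leq_card/subsetP => p.
rewrite !inE => /andP[pi lt_pi]; rewrite (leq_trans pi ij) (lt_le_trans lt_pi) //.
by case: ltngtP ij => // [/point_of_cell_homo/ltW|/val_inj ->].
Qed.

Lemma cell_profile_le (j : 'I_n) : (cell_profile c j <= m * j)%N.
Proof.
rewrite cell_profile_card mulnC -(card_rows (ltnW (ltn_ord j))).
by apply/subset_leq_card/subsetP => p; rewrite !inE => /andP[].
Qed.

Lemma lift_pt_ltE p q : (lift_pt x p < lift_pt x q) = lift_lt (root_level c) p q.
Proof.
case: p q => [i t] [i' t']; rewrite /lift_pt /lift_lt /= -!natr1.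
have tm := ltn_ord t; have t'm := ltn_ord t'.
case: ltngtP => [ii'|i'i|/val_inj <-]; last by rewrite !addrA ltrD2r ltrD2l ltr_nat.
- have := point_of_cell_homo ii'; case: leqP => tt' /= lt_x.
    have le_t : t%:R <= t'%:R :> R by rewrite ler_nat.
    by apply/idP; lra.
  have [<- _] := lt_sub_nat ii' (ltnW (leq_ltn_trans (leq_subr t' t) tm)).
  by rewrite natrB ?(ltnW tt'); apply/idP/idP; lra.
- have := point_of_cell_homo i'i; case: ltnP => tt' /= lt_x; last first.
    have le_t : t'%:R <= t%:R :> R by rewrite ler_nat.
    by apply/idP; lra.
  have [<- ne_x] := lt_sub_nat i'i (ltnW (leq_ltn_trans (leq_subr t t') t'm)).
  rewrite natrB ?(ltnW tt') // in ne_x *.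
  by rewrite -leNgt le_eqVlt (negbTE ne_x) /=; apply/idP/idP; lra.
Qed.

End PointOfCell.
End Cells.

Arguments rows {n} m k.
Arguments points_below {R n} m x k y.

Section Height.
Variables (R : realFieldType) (n m : nat).
Lemma c0E (a : proot n) : c0 n m a = m :> nat.
Proof. by rewrite ffunE inordK // ltnS -addnn leq_addr. Qed.

Lemma separatesE (c c' : cellidx n m) (a : proot n) (k : 'I_(m.*2)) :
  is_region R c -> is_region R c' ->
  separates R c c' (a, k) <-> (k < c a)%N != (k < c' a)%N.
Proof.
move=> [x xc] [y yc'].
have lev (d : cellidx n m) z : in_cell R d z ->
    (hlevel R k < rootpair a z) = (k < d a)%N /\ rootpair a z != hlevel R k.
  by move=> [_ /(_ a)]; apply: in_interval_level.
split=> [[x' [y' [x'c [y'c /= sep]]]]|neq].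
  have [<- _] := lev _ _ x'c; have [<- _] := lev _ _ y'c.
  by case: sep => /andP[lt1 lt2]; rewrite lt2 ltNge (ltW lt1).
have [lx nx] := lev _ _ xc; have [ly ny] := lev _ _ yc'.
rewrite -lx -ly in neq; exists x, y; do 2!split=> //=.
move: nx ny; rewrite !neq_lt => /orP[] hx /orP[] hy.
- by rewrite (lt_gtF hx) (lt_gtF hy) in neq.
- by left; rewrite hx hy.
- by right; rewrite hx hy.
- by rewrite hx hy in neq.
Qed.

Lemma sum_proot (F : 'I_n -> 'I_n -> nat) :
  (\sum_(a : proot n) F (val a).1 (val a).2 = \sum_(j < n) \sum_(i < n | (i < j)%N) F i j)%N.
Proof.
transitivity (\sum_(p : 'I_n * 'I_n | (p.1 < p.2)%N) F p.1 p.2)%N.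
  rewrite (reindex_omap (val : proot n -> _) insub) => [|p Pp]; last by rewrite insubT.
  by apply: eq_bigl => -[p lt_p] /=; rewrite insubT ?lt_p /= ?eqxx.
rewrite -(pair_big_dep xpredT (fun i j : 'I_n => (i < j)%N)) /=.
by rewrite (exchange_big_dep xpredT).
Qed.

Lemma sum_root_level_compl (c : cellidx n m) (j : 'I_n) :
  (\sum_(i < n | (i < j)%N) (m - root_level c i j) = m * j - cell_profile c j)%N.
Proof.
rewrite sumnB => [|i _]; last exact: root_level_le.
rewrite sum_nat_cond_const card_set_sum sum_ord_lt (minn_idPl (ltnW (ltn_ord j))) mulnC.
congr (_ - _)%N; rewrite /cell_profile [RHS](bigID (fun i : 'I_n => (i < j)%N)) /=.
by rewrite [X in (_ + X)%N]big1 ?addn0 // => i; rewrite -leqNgt => /root_level0.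
Qed.

Hypothesis n_gt0 : (0 < n)%N.

Definition center (x : 'I_n -> R) (i : 'I_n) : R := x i - (\sum_(k < n) x k) / n%:R.

Lemma center_inV x : inV (center x).
Proof.
have n0 : n%:R != 0 :> R by rewrite pnatr_eq0 -lt0n.
by rewrite /inV /center sumrB sumr_const card_ord -[(_ / _) *+ n]mulr_natr divfK // subrr.
Qed.

Lemma rootpair_center x a : rootpair a (center x) = rootpair a x.
Proof. by rewrite /rootpair /center; lra. Qed.

Lemma is_region_c0 : is_region R (c0 n m).
Proof.
exists (center (fun i => i%:R / n%:R)); split=> [|a]; first exact: center_inV.
rewrite /in_interval c0E rootpair_center /rootpair.
have n0 : 0 < n%:R :> R by rewrite ltr0n.
case: a => -[i j] /= ij.
have ltij : i%:R < j%:R :> R by rewrite ltr_nat.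
have ltjn : j%:R < n%:R :> R by rewrite ltr_nat.
have ge0i : 0 <= i%:R :> R by rewrite ler0n.
split; right; first by rewrite subrr -mulrBl mulr_gt0 ?subr_gt0 ?invr_gt0.
by rewrite -addn1 natrD addrAC subrr add0r -mulrBl ltr_pdivrMr // mul1r; lra.
Qed.

Lemma height_positive (c : cellidx n m) : is_region R c -> positive_cell c ->
  height R c = (\sum_(a : proot n) (c a - m))%N.
Proof.
move=> c_reg c_pos; rewrite /height card_set_sum sum_pair; apply: eq_bigr => a _.
have sepE (k : 'I_(m.*2)) : propb (separates R c (c0 n m) (a, k)) = (m <= k < c a)%N.
  have := separatesE a k c_reg is_region_c0; rewrite c0E => sep_k.
  by apply/propbP/idP => [/sep_k|mkc]; last apply/sep_k;
    have := c_pos a; case: ltnP; case: ltnP; lia.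
under eq_bigr => k _ do rewrite sepE.
by rewrite sum_ord_range; have := ltn_ord (c a); lia.
Qed.

Lemma coh_positive (c : cellidx n m) : is_region R c -> positive_cell c ->
  coh R c = (\sum_(j < n) (m * j - cell_profile c j))%N.
Proof.
move=> c_reg c_pos; rewrite /coh height_positive // -sum1_card big_distrr /= muln1.
rewrite -sumnB => [|a _]; last by have := ltn_ord (c a); lia.
under eq_bigr => a _ do rewrite -root_levelE.
by rewrite (sum_proot (fun i j => m - root_level c i j)%N); apply: eq_bigr => j _;
   rewrite sum_root_level_compl.
Qed.

End Height.

Section Injectivity.
Variables (R : realFieldType) (n m : nat).
Hypothesis m_gt0 : (0 < m)%N.

Lemma positive_cell_inj (c c' : cellidx n m) :
  is_region R c -> positive_cell c -> is_region R c' -> positive_cell c' ->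
  (forall j, cell_profile c j = cell_profile c' j) -> c = c'.
Proof.
move=> [x xc] c_pos [y yc'] c'_pos eq_prof.
suff eq_rl (k : nat) (j : 'I_n) : (j < k)%N -> forall i, root_level c i j = root_level c' i j.
  apply/ffunP => a; apply: ord_inj; have := root_levelE c a.
  rewrite (eq_rl n.+1 _ (ltnW (ltn_ord _))) root_levelE.
  by move/(congr1 (addn m)); rewrite !subnKC.
elim: k j => [//|k IH] j; rewrite ltnS leq_eqVlt => /predU1P[jk|]; last exact: IH.
have eq_below : points_below m x j (x j) = points_below m y j (y j).
  apply: eq_sublevel_sets => [p q|]; last first.
    by rewrite -(cell_profile_card m_gt0 c_pos xc) -(cell_profile_card m_gt0 c'_pos yc').
  rewrite !inE jk => pk qk; rewrite (lift_pt_ltE m_gt0 c_pos xc) (lift_pt_ltE m_gt0 c'_pos yc').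
  by rewrite /lift_lt !IH.
by move=> i; rewrite (root_level_row m_gt0 c_pos xc) (root_level_row m_gt0 c'_pos yc') eq_below.
Qed.

End Injectivity.

(** * Every profile comes from a positive region *)

Section Gap.
Variables (R : realFieldType) (T : finType) (A : {set T}) (f : T -> R).

Lemma exists_next_value z : (exists2 p, p \in A & z < f p) ->
  exists q, [/\ q \in A, z < f q & forall p, p \in A -> z < f p -> f q <= f p].
Proof.
move=> [q0 q0A zq0].
have Pq0 : (q0 \in A) && (z < f q0) by rewrite q0A zq0.
case: (arg_minP (P := fun p => (p \in A) && (z < f p)) f Pq0) => q /andP[qA zq] q_min.
by exists q; split=> // p pA zp; apply: q_min; rewrite pA zp.
Qed.

Lemma exists_cut_above z : exists y, [/\ z < y, {in A, forall p, f p != y} &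
  {in A, forall p, (f p < y) = (f p <= z)}].
Proof.
case: (boolP [exists p, (p \in A) && (z < f p)]) => [/existsP[p0 /andP[p0A zp0]]|].
  have [q [qA zq q_min]] := exists_next_value (ex_intro2 _ _ p0 p0A zp0).
  exists ((z + f q) / 2); have [zy yq] := midf_lt zq; split=> // p pA.
    by apply/eqP => fpy; have := q_min p pA; rewrite fpy; lra.
  apply/idP/idP => [lt_py|]; last by lra.
  by rewrite leNgt; apply/negP => /(q_min p pA); lra.
rewrite negb_exists => /forallP none_above.
exists (z + 1); split=> [|p pA|p pA]; first lra.
all: have := none_above p; rewrite pA /= -leNgt => ?.
- by apply/eqP; lra.
- by apply/idP/idP; lra.
Qed.

Lemma exists_cut_count L : {in A &, injective f} -> {in A, forall p, f p != L} ->
  forall d, (#|[set p in A | (f p < L)%R]| + d <= #|A|)%N ->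
  exists y, [/\ L < y, {in A, forall p, f p != y} &
                #|[set p in A | f p < y]| = (#|[set p in A | (f p < L)%R]| + d)%N].
Proof.
move=> f_inj f_neqL; elim=> [|d IH] le_dA.
  have [y [Ly f_neqy below_y]] := exists_cut_above L.
  exists y; split=> //; rewrite addn0; apply: eq_card => p; rewrite !inE.
  by case pA: (p \in A) => //=; rewrite below_y // le_eqVlt (negbTE (f_neqL p pA)).
have [y [Ly f_neqy card_y]] := IH (leq_trans (leq_add (leqnn _) (leqnSn d)) le_dA).
have [p0 p0A yp0] : exists2 p, p \in A & y < f p.
  case: (boolP [exists p, (p \in A) && (y < f p)]) => [/existsP[p /andP[]]|]; first by exists p.
  rewrite negb_exists => /forallP none_above; move: le_dA; rewrite addnS -card_y.
  suff -> : [set p in A | f p < y] = A by lia.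
  apply/setP => p; rewrite !inE; case pA: (p \in A) => //=.
  by have := none_above p; rewrite pA /= -leNgt le_eqVlt (negbTE (f_neqy p pA)).
have [q [qA yq q_min]] := exists_next_value (ex_intro2 _ _ p0 p0A yp0).
have [y' [qy' f_neqy' below_y']] := exists_cut_above (f q).
exists y'; split=> //; first by rewrite (lt_trans Ly) // (lt_trans yq).
suff -> : [set p in A | f p < y'] = q |: [set p in A | f p < y].
  by rewrite cardsU1 card_y !inE qA /= ltNge (ltW yq) /=; lia.
apply/setP => p; rewrite !inE; case pA: (p \in A); rewrite /= ?orbF; last first.
  by case: eqP => // eq_pq; move: pA; rewrite eq_pq qA.
rewrite below_y' //; apply/idP/orP => [le_pq|[/eqP ->//|lt_py]]; last exact/ltW/(lt_trans lt_py).
case: (ltrP (f p) y) => [|le_yp]; [by right|left].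
have yp : y < f p by rewrite lt_neqAle le_yp andbT eq_sym f_neqy.
by apply/eqP/(f_inj p q pA qA)/eqP; rewrite eq_le le_pq q_min.
Qed.

End Gap.

Section Construction.
Variables (R : realFieldType) (n m : nat) (E : nat -> nat).
Hypotheses (E_homo : forall i j, (i <= j)%N -> (j < n)%N -> (E i <= E j)%N)
  (E_le : forall i, (i < n)%N -> (E i <= m * i)%N).

Local Notation ordf x := (x \o @nat_of_ord n).

Definition generic (x : nat -> R) (k : nat) : Prop :=
  forall i i', (i < i' < k)%N -> x i < x i' /\ forall s, (1 <= s <= m)%N -> x i' - x i != s%:R.

Definition set_at (x : nat -> R) (k : nat) (y : R) (i : nat) : R := if i == k then y else x i.

Definition realizes (x : nat -> R) (k : nat) : Prop :=
  generic x k /\ forall j, (j < k)%N -> #|points_below m (ordf x) j (x j)| = E j.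

Lemma lift_pt_inj x k : generic x k -> {in rows m k &, injective (lift_pt (ordf x))}.
Proof.
move=> gen_x [i t] [i' t']; rewrite !inE /lift_pt /= -!natr1 => ik i'k eq_lift.
have tm := ltn_ord t; have t'm := ltn_ord t'.
wlog ii' : i t i' t' ik i'k eq_lift tm t'm / (i <= i')%N.
  move=> sym; case: (leqP i i') => [|/ltnW]; first exact: sym.
  by move/(sym _ _ _ _ i'k ik (esym eq_lift) t'm tm) => [-> ->].
move: ii'; rewrite leq_eqVlt => /predU1P[/ord_inj eq_ii|lt_ii'].
  by move: eq_lift; rewrite eq_ii => /addrI/addIr/eqP; rewrite eqr_nat => /eqP/ord_inj ->.
exfalso; have [lt_x ne_x] := gen_x i i' (ltac:(lia)).
case: (leqP t t') => tt'.
  have : t%:R <= t'%:R :> R by rewrite ler_nat.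
  by move: eq_lift; lra.
have := ne_x (t - t')%N (ltac:(lia)); rewrite natrB ?(ltnW tt') //.
by rewrite (_ : x i' - x i = t%:R - t'%:R) ?eqxx //; lra.
Qed.

Lemma lift_pt_neq_last x k : generic x k ->
  {in rows m k, forall p, lift_pt (ordf x) p != x k.-1}.
Proof.
move=> gen_x [i t]; rewrite inE /lift_pt /= => ik.
have t1m : (0 < t.+1 <= m)%N by rewrite ltn_ord.
case: (ltnP i k.-1) => [lt_ik|le_ki].
  have [_ /(_ _ t1m)] := gen_x i k.-1 (ltac:(lia)).
  by apply: contraNneq => <-; rewrite addrC addKr.
have -> : (i : nat) = k.-1 by lia.
by rewrite gt_eqF // ltrDl ltr0n.
Qed.

Lemma points_below_rowS (x : nat -> R) j :
  [set p in rows m j.+1 | lift_pt (ordf x) p < x j] = points_below m (ordf x) j (x j).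
Proof.
apply/setP => -[i t]; rewrite !inE /lift_pt /= ltnS.
by case: ltngtP => //= ->; rewrite ltNge lerDl ler0n.
Qed.

Lemma lift_pt_set_at x k y (p : 'I_n * 'I_m) : (p.1 < k)%N ->
  lift_pt (ordf (set_at x k y)) p = lift_pt (ordf x) p.
Proof. by move=> pk; rewrite /lift_pt /set_at /= ltn_eqF. Qed.

Lemma generic_set_at x k y : (k < n)%N -> generic x k -> x k.-1 < y ->
  {in rows m k, forall p, lift_pt (ordf x) p != y} -> generic (set_at x k y) k.+1.
Proof.
move=> kn gen_x lt_y neq_y i i' /andP[ii' i'k]; rewrite /set_at.
case: (ltnP i' k) => [lt_i'k|le_ki'].
  rewrite (ltn_eqF lt_i'k) (ltn_eqF (ltn_trans ii' lt_i'k)).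
  by apply: gen_x; rewrite ii'.
have eq_i'k : i' = k by lia.
rewrite eq_i'k eqxx ltn_eqF -?eq_i'k //; split.
  apply: le_lt_trans lt_y; case: (ltnP i k.-1) => [ik|ki]; last by have -> : i = k.-1 by lia.
  by have [/ltW] := gen_x i k.-1 (ltac:(lia)).
move=> s /andP[s_gt0 sm]; have s1m : (s.-1 < m)%N by lia.
have i_n : (i < n)%N by lia.
have p_in : (Ordinal i_n, Ordinal s1m) \in rows m k by rewrite inE /= -eq_i'k.
by apply: contraNneq (neq_y _ p_in) => eq_s; rewrite /lift_pt /= prednK // -eq_s addrC subrK.
Qed.

Lemma realizes_step x k : (k < n)%N -> realizes x k -> exists y, realizes (set_at x k y) k.+1.
Proof.
move=> kn [gen_x card_x].
have card_L : #|[set p in rows m k | (lift_pt (ordf x) p < x k.-1)%R]| = (E k.-1 * (0 < k))%N.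
  case: k kn gen_x card_x => [|k] kn gen_x card_x /=.
    by apply/eqP; rewrite muln0 cards_eq0; apply/eqP/setP => p; rewrite !inE ltn0.
  by rewrite muln1 points_below_rowS card_x.
have le_LE : (E k.-1 * (0 < k) <= E k)%N.
  case: k kn {gen_x card_x card_L} => [|k] kn /=; first by rewrite muln0.
  by rewrite muln1 (E_homo (leqnSn k) kn).
have le_L : (#|[set p in rows m k | (lift_pt (ordf x) p < x k.-1)%R]|
             + (E k - E k.-1 * (0 < k)) <= #|rows m k : {set 'I_n * 'I_m}|)%N.
  by rewrite card_L (card_rows m (ltnW kn)) subnKC // mulnC E_le.
(* [y] is a cut above [x (k - 1)] with exactly [E k] lifted points below it. *)
have [y [lt_y neq_y card_y]] :=
  exists_cut_count (lift_pt_inj gen_x) (lift_pt_neq_last gen_x) le_L.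
exists y; split=> [|j]; first exact: generic_set_at.
rewrite ltnS leq_eqVlt => /predU1P[-> | lt_jk].
  rewrite /set_at eqxx -[RHS](subnKC le_LE) -{1}card_L -card_y.
  by apply: eq_card => p; rewrite !inE; case: ltnP => //= pk; rewrite lift_pt_set_at.
rewrite /set_at (ltn_eqF lt_jk) -card_x //; apply: eq_card => p; rewrite !inE.
by case: ltnP => //= pj; rewrite lift_pt_set_at // (ltn_trans pj).
Qed.

Lemma realizes_exists : exists x, realizes x n.
Proof.
suff ex_k k : (k <= n)%N -> exists x, realizes x k by apply: ex_k.
elim: k => [_|k IH kn]; first by exists (fun _ => 0); split=> [i i'|j]; rewrite ?ltn0 ?andbF.
by have [x /(realizes_step kn)[y real_y]] := IH (ltnW kn); exists (set_at x k y).
Qed.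

End Construction.

Section Realization.
Variables (R : realFieldType) (n m : nat).
Hypotheses (n_gt0 : (0 < n)%N) (m_gt0 : (0 < m)%N).

Lemma in_interval_count (v : R) : 0 < v -> (forall s, (1 <= s <= m)%N -> v != s%:R) ->
  (#|[set t : 'I_m | (t.+1%:R < v)%R]| <= m)%N /\
  in_interval (inord (m + #|[set t : 'I_m | t.+1%:R < v]|) : 'I_(m.*2.+1)) v.
Proof.
move=> v_gt0 v_neq; set S := [set t : 'I_m | _].
have le_Sm : (#|S| <= m)%N by rewrite -[m in X in (_ <= X)%N]card_ord max_card.
have S_lt (t : 'I_m) : (t.+1%:R < v) = (t < #|S|)%N.
  apply: (downward_closed_ltE (P := fun t : 'I_m => t.+1%:R < v)) => a b ba.
  by apply: le_lt_trans; rewrite ler_nat.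
split=> //; rewrite /in_interval inordK -?addnn ?ltnS ?leq_add2l //.
split.
  right; rewrite natrD addrAC subrr add0r.
  case S0 : #|S| => [//|k]; have km : (k < m)%N by rewrite -S0.
  by rewrite (S_lt (Ordinal km)) S0.
case: (ltnP #|S| m) => [Sm|mS]; last by left; apply/eqP; rewrite eqn_add2l eqn_leq le_Sm.
right; rewrite -addnS natrD addrAC subrr add0r lt_neqAle v_neq ?Sm //=.
by rewrite leNgt (S_lt (Ordinal Sm)) ltnn.
Qed.

Lemma realize_profile (E : nat -> nat) :
  (forall i j, (i <= j)%N -> (j < n)%N -> (E i <= E j)%N) ->
  (forall i, (i < n)%N -> (E i <= m * i)%N) ->
  exists c : cellidx n m,
    [/\ is_region R c, positive_cell c & forall j : 'I_n, cell_profile c j = E j].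
Proof.
move=> E_homo E_le; have [x [gen_x card_x]] := realizes_exists R E_homo E_le.
pose d (a : proot n) := x (val a).2 - x (val a).1.
have d_gen a : 0 < d a /\ forall s, (1 <= s <= m)%N -> d a != s%:R.
  have ij_n : ((val a).1 < (val a).2 < n)%N by rewrite (valP a) ltn_ord.
  by have [lt_x ne_x] := gen_x _ _ ij_n; rewrite subr_gt0.
pose c : cellidx n m := [ffun a => inord (m + #|[set t : 'I_m | t.+1%:R < d a]|)].
pose y := center (x \o @nat_of_ord n).
have y_in : in_cell R c y.
  split=> [|a]; first exact: center_inV.
  by rewrite rootpair_center ffunE; have [+ +] := d_gen a => /in_interval_count/[apply] -[].
have c_pos : positive_cell c.
  move=> a; rewrite ffunE; have [+ +] := d_gen a => /in_interval_count/[apply] -[le_m _].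
  by rewrite inordK ?leq_addr // ltnS -addnn leq_add2l.
exists c; split=> // [|j]; first by exists y.
rewrite (cell_profile_card m_gt0 c_pos y_in) -(card_x j (ltn_ord j)).
by apply: eq_card => -[i t]; rewrite !inE /lift_pt /y /center /=; congr andb; apply/idP/idP; lra.
Qed.

End Realization.

(** * The bijection with m-Dyck paths *)

Section DyckBijection.
Variables (R : realFieldType) (n m : nat).
Hypotheses (n_gt0 : (0 < n)%N) (m_gt0 : (0 < m)%N).

Definition profile_nat (c : cellidx n m) (b : nat) : nat := oapp (cell_profile c) 0%N (insub b).

Lemma profile_natE (c : cellidx n m) (j : 'I_n) : profile_nat c j = cell_profile c j.
Proof. by rewrite /profile_nat valK. Qed.

Definition region_path (c : cellidx n m) : (m * n + n).-tuple bool :=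
  insubd (nseq_tuple (m * n + n) false) (profile_word (profile_nat c) 0 n (m * n)).

Section PositiveRegion.
Variable c : cellidx n m.
Hypotheses (c_reg : is_region R c) (c_pos : positive_cell c).

Lemma profile_nat_le i : (i < n)%N -> (profile_nat c i <= m * i)%N.
Proof.
have [x x_in] := c_reg.
by move=> i_n; rewrite -[i]/(Ordinal i_n : nat) profile_natE (cell_profile_le m_gt0 c_pos x_in).
Qed.

Lemma profile_nat_homo i j : (i <= j)%N -> (j < n)%N -> (profile_nat c i <= profile_nat c j)%N.
Proof.
have [x x_in] := c_reg.
move=> ij j_n; rewrite -[i]/(Ordinal (leq_ltn_trans ij j_n) : nat) -[j]/(Ordinal j_n : nat).
by rewrite !profile_natE (cell_profile_homo m_gt0 c_pos x_in).
Qed.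

Lemma profile_between_nat : profile_between (profile_nat c) 0 n (m * n).
Proof.
apply: profile_betweenW => // [|i i_n]; first exact: profile_nat_homo.
by rewrite (leq_trans (profile_nat_le i_n)) // leq_mul2l ltnW ?orbT.
Qed.

Lemma region_pathE : val (region_path c) = profile_word (profile_nat c) 0 n (m * n).
Proof.
by rewrite /region_path insubdK // unfold_in (size_profile_word profile_between_nat) subn0.
Qed.

Lemma east_before_region_path b : (b < n)%N -> east_before (region_path c) b = profile_nat c b.
Proof.
by move=> b_n; rewrite region_pathE (east_before_profile_word profile_between_nat b_n) subn0.
Qed.

Lemma dyckb_region_path : dyckb m n (region_path c).
Proof.
by rewrite region_pathE; apply: dyckb_profile_word profile_nat_le; apply: profile_nat_homo.
Qed.

Lemma coh_region_path : coh R c = area m n (region_path c).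
Proof.
rewrite coh_positive // area_east_before => [|i i_n]; last first.
  by rewrite east_before_region_path ?profile_nat_le.
by apply: eq_bigr => b _; rewrite east_before_region_path ?profile_natE.
Qed.

End PositiveRegion.

Definition pos_regions : {set cellidx n m} := [set c | propb (is_pos_region R c)].

Lemma pos_regionsP c : reflect (is_region R c /\ positive_cell c) (c \in pos_regions).
Proof. by rewrite inE; apply: (iffP (propbP _)) => /(is_pos_regionE R m_gt0). Qed.

Lemma region_path_inj : {in pos_regions &, injective region_path}.
Proof.
move=> c c' /pos_regionsP[c_reg c_pos] /pos_regionsP[c'_reg c'_pos] eq_path.
apply: (positive_cell_inj m_gt0 c_reg c_pos c'_reg c'_pos) => j.
by rewrite -!profile_natE -!east_before_region_path // eq_path.
Qed.

Lemma region_path_image :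
  region_path @: pos_regions = [set D : (m * n + n).-tuple bool | dyckb m n D].
Proof.
apply/setP => D; rewrite inE; apply/imsetP/idP => [[c /pos_regionsP[c_reg c_pos] ->]|D_dyck].
  exact: dyckb_region_path.
have [D_le D_word] := dyckb_profile D_dyck.
have [c [c_reg c_pos c_prof]] := realize_profile R n_gt0 m_gt0
  (fun i j ij _ => east_before_homo D ij) D_le.
exists c; first exact/pos_regionsP.
apply: val_inj; rewrite region_pathE // -[X in X = _]D_word; apply: eq_profile_word => i i_n.
by rewrite -[i]/(Ordinal i_n : nat) profile_natE c_prof.
Qed.

End DyckBijection.

Theorem proposition3p10 (R : realFieldType) (n m : nat) (hn : (1 <= n)%N) (hm : (1 <= m)%N) :
  \sum_(c : cellidx n m | propb (is_pos_region R c)) 'X^(coh R c)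
  = \sum_(D : (m * n + n).-tuple bool | dyckb m n D) 'X^(area m n D) :> {poly int}.
Proof.
transitivity (\sum_(c in pos_regions R n m) 'X^(area m n (region_path c)) : {poly int}).
  apply: eq_big => [c|c /propbP/(is_pos_regionE R hm) [c_reg c_pos]]; first by rewrite inE.
  by rewrite (coh_region_path hn hm).
rewrite -(big_imset (fun D : (m * n + n).-tuple bool => 'X^(area m n D)) (region_path_inj hm)) /=.
rewrite (region_path_image R hn hm).
by apply: eq_bigl => D; rewrite inE.
Qed.
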